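(* Let $u_{\varepsilon,\ell}$ be a 3iet word with parameters $\varepsilon,\ell$, and let the continued fraction $\varepsilon=[0,a_1,a_2,a_3,\dots]$ have bounded partial quotients. Then $$ {\rm ind}(u_{\varepsilon,\ell})\geq \sup_{n\in\mathbb N} \Big\lfloor \frac{a_n}{2}\Big\rfloor\,. $$
   Context: Parameters $\varepsilon,\ell$ satisfy $\varepsilon\in(0,1)\setminus\mathbb Q$ and $\max\{\varepsilon,1-\varepsilon\}<\ell<1$. The three interval exchange $T_{\varepsilon,\ell}:[0,\ell)\to[0,\ell)$ is defined by $T_{\varepsilon,\ell}(x)=x+1-\varepsilon$ for $x\in I_A:=[0,\ell-1+\varepsilon)$, $T_{\varepsilon,\ell}(x)=x+1-2\varepsilon$ for $x\in I_B:=[\ell-1+\varepsilon,\varepsilon)$, and $T_{\varepsilon,\ell}(x)=x-\varepsilon$ for $x\in I_C:=[\varepsilon,\ell)$. A 3iet word with parameters $\varepsilon,\ell$ is the word $u=(u_n)_{n\in\mathbb N}$ over $\{A,B,C\}$ with $u_n=X$ iff $T_{\varepsilon,\ell}^n(x_0)\in I_X$, for some $x_0\in[0,\ell)$; its language and index do not depend on $x_0$. A word $v$ is a power $w^r$ ($r=|v|/|w|$) if $|v|\ge|w|$ and $v$ is a prefix of $www\cdots$; ${\rm ind}(w)=\sup\{r\in\mathbb Q: w^r \text{ is a factor of } u\}$ and ${\rm ind}(u)=\sup\{{\rm ind}(w): w \text{ a factor of } u\}$. *)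

From Stdlib Require Import Reals QArith List ZArith.
From Coquelicot Require Import Coquelicot.
Open Scope R_scope.

Definition T3 (eps l x : R) : R :=
  if Rlt_dec x (l - 1 + eps) then x + 1 - eps
  else if Rlt_dec x eps then x + 1 - 2 * eps
  else x - eps.

Inductive letter := LA | LB | LC.

Definition letter_eq_dec (a b : letter) : {a = b} + {a <> b}.
Proof. decide equality. Defined.

Definition letter_of (eps l x : R) : letter :=
  if Rlt_dec x (l - 1 + eps) then LA
  else if Rlt_dec x eps then LB
  else LC.

Definition iet3_word (eps l x0 : R) (n : nat) : letter :=
  letter_of eps l (Nat.iter n (T3 eps l) x0).

Definition is_factor (u : nat -> letter) (w : list letter) : Prop :=
  exists i : nat, forall j : nat, (j < length w)%nat -> nth j w LA = u (i + j)%nat.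

(* v is a power w^r of w (r = |v|/|w|): |v| >= |w| and v is a prefix of www... *)
Definition is_power_of (v w : list letter) : Prop :=
  (0 < length w)%nat /\ (length w <= length v)%nat /\
  forall j : nat, (j < length v)%nat -> nth j v LA = nth (j mod length w) w LA.

Definition ind_word (u : nat -> letter) (w : list letter) : Rbar :=
  Lub_Rbar (fun r : R => exists v : list letter,
    is_factor u v /\ is_power_of v w /\ r = INR (length v) / INR (length w)).

(* ind(u) = sup { ind(w) : w a (nonempty) factor of u }, expressed as the
   supremum of the reals lying below some ind(w) (so that ind(w) = +oo is
   handled correctly). *)
Definition ind_inf (u : nat -> letter) : Rbar :=
  Lub_Rbar (fun r : R => exists w : list letter,
    w <> nil /\ is_factor u w /\ Rbar_le (Finite r) (ind_word u w)).

(* Continued fraction of eps in (0,1): Gauss map iterates x_0 = eps,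
   x_{n+1} = 1/x_n - floor(1/x_n); partial quotients a_{n+1} = floor(1/x_n),
   so that eps = [0; a_1, a_2, ...]. *)
Definition gauss_iter (eps : R) (n : nat) : R :=
  Nat.iter n (fun x => / x - IZR (Int_part (/ x))) eps.

Definition cf_quotient (eps : R) (n : nat) : Z :=
  Int_part (/ gauss_iter eps (n - 1)).

Definition irrational (x : R) : Prop := ~ exists q : Q, x = Q2R q.

(* The 3iet [T3 eps l] is the map induced on [[0,l)] by the rotation [x |-> x - eps] of
   [[0,1)]: since [l > max(eps, 1 - eps)], an orbit leaves [[0,l)] for at most one step.
   Let [q] be a convergent denominator of [eps], [a] the next partial quotient and
   [d = p - q eps].  Shifting a rotation orbit by [q] steps moves each point by [d]
   (mod 1), so the coding (letter, or "outside [[0,l)]") of [z_j] and [z_(j+q)] agree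
   unless [z_j] or its image lies within [|d|] of [0] or [l].  By the best-approximation
   property, such visits are at least [a q] steps apart, which leaves a stretch of about
   [(a/2) q] steps on which the coding is [q]-periodic; passing to return times gives a
   power of exponent [floor(a/2)] in the 3iet word.  When [q] is too small for this count
   (the first partial quotient, or the second when [a_1 = 1]) the power is a plain run of
   [C]s, resp. [A]s. *)
From Stdlib Require Import Reals QArith List ZArith.
From Coquelicot Require Import Coquelicot.
From Stdlib Require Import Qreals Lra Lia Psatz Classical.
Open Scope R_scope.

Lemma Q2R_inject_Z (z : Z) : Q2R (inject_Z z) = IZR z.
Proof. unfold Q2R; simpl. field. Qed.

Lemma irrational_inv (x : R) : x <> 0 -> irrational x -> irrational (/ x).
Proof.
  intros Hx Hirr [q Hq]. apply Hirr. exists (Qinv q).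
  assert (Hq0 : ~ q == 0) by (intro E; apply Qeq_eqR in E; rewrite RMicromega.Q2R_0 in E;
    apply Hx; rewrite <- (Rinv_inv x), Hq, E; apply Rinv_0).
  rewrite Q2R_inv by exact Hq0. rewrite <- Hq. now rewrite Rinv_inv.
Qed.

Lemma irrational_sub_IZR (x : R) (k : Z) : irrational x -> irrational (x - IZR k).
Proof.
  intros Hirr [q Hq]. apply Hirr. exists (q + inject_Z k)%Q.
  rewrite Q2R_plus, Q2R_inject_Z, <- Hq. ring.
Qed.

Lemma gauss_map_range (x : R) : 0 < x < 1 -> irrational x ->
  0 < / x - IZR (Int_part (/ x)) < 1 /\ irrational (/ x - IZR (Int_part (/ x))).
Proof.
  intros Hx Hirr.
  assert (Hfrac : irrational (/ x - IZR (Int_part (/ x))))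
    by (apply irrational_sub_IZR, irrational_inv; [lra | exact Hirr]).
  destruct (base_Int_part (/ x)) as [B1 B2].
  split; [|exact Hfrac]. split; [|lra].
  destruct (Rle_lt_or_eq_dec _ _ B1) as [Hlt|Heq]; [lra|].
  exfalso. apply Hfrac. exists 0%Q. rewrite Heq, RMicromega.Q2R_0. ring.
Qed.

Fixpoint continuant (a : nat -> Z) (x y : Z) (i : nat) : Z :=
  match i with
  | O => x
  | S O => y
  | S (S j as k) => (a j * continuant a x y k + continuant a x y j)%Z
  end.

Lemma continuant_SS a x y i :
  continuant a x y (S (S i)) = (a i * continuant a x y (S i) + continuant a x y i)%Z.
Proof. reflexivity. Qed.

Lemma continuant_det a i :
  Z.abs (continuant a 1 0 i * continuant a 0 1 (S i)
         - continuant a 1 0 (S i) * continuant a 0 1 i) = 1%Z.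
Proof.
  induction i as [|i IH]; [reflexivity|].
  rewrite !continuant_SS.
  replace (_ - _)%Z with (- (continuant a 1 0 i * continuant a 0 1 (S i)
    - continuant a 1 0 (S i) * continuant a 0 1 i))%Z by ring.
  now rewrite Z.abs_opp.
Qed.

Lemma continuant_incr a : (forall i, 1 <= a i)%Z ->
  forall i, (0 <= continuant a 0 1 i)%Z /\
    (1 <= continuant a 0 1 (S i))%Z /\ (continuant a 0 1 i <= continuant a 0 1 (S i))%Z.
Proof.
  intros Ha i. induction i as [|i IH]; [simpl; lia|].
  rewrite continuant_SS. specialize (Ha i). nia.
Qed.

(* [u] has a factor [w^m] with [|w| = p]: a window of length [m p] with period [p]. *)
Definition has_power_factor (u : nat -> letter) (m : nat) : Prop :=
  exists t p, (1 <= p)%nat /\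
    forall i, (i < (m - 1) * p)%nat -> u (t + i + p)%nat = u (t + i)%nat.

Lemma ind_word_ge u w v : is_factor u v -> is_power_of v w ->
  Rbar_le (INR (length v) / INR (length w)) (ind_word u w).
Proof. intros Hf Hp. apply (proj1 (Lub_Rbar_correct _)). now exists v. Qed.

Lemma ind_inf_ge u w (r : R) : w <> nil -> is_factor u w -> Rbar_le r (ind_word u w) ->
  Rbar_le r (ind_inf u).
Proof. intros Hw Hf Hr. apply (proj1 (Lub_Rbar_correct _)). now exists w. Qed.

Lemma nth_map_seq (f : nat -> letter) n j d : (j < n)%nat ->
  nth j (map f (seq 0 n)) d = f j.
Proof.
  intros H. rewrite (nth_indep _ d (f 0%nat)) by (rewrite length_map, length_seq; auto).
  rewrite map_nth, seq_nth by auto. reflexivity.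
Qed.

Lemma periodic_window_mod (u : nat -> letter) m t p : (1 <= p)%nat ->
  (forall i, (i < (m - 1) * p)%nat -> u (t + i + p)%nat = u (t + i)%nat) ->
  forall j, (j < m * p)%nat -> u (t + j)%nat = u (t + j mod p)%nat.
Proof.
  intros Hp Hper j. induction j as [j IH] using lt_wf_ind. intros Hj.
  destruct (Nat.lt_ge_cases j p).
  - now rewrite Nat.mod_small.
  - replace j with ((j - p) + 1 * p)%nat by lia.
    rewrite Nat.Div0.mod_add, Nat.mul_1_l, Nat.add_assoc, Hper by nia.
    apply IH; nia.
Qed.

Lemma ind_inf_ge_power u m : (1 <= m)%nat -> has_power_factor u m ->
  Rbar_le (INR m) (ind_inf u).
Proof.
  intros Hm [t [p [Hp Hper]]].
  set (f := fun i => u (t + i)%nat).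
  set (w := map f (seq 0 p)). set (v := map f (seq 0 (m * p))).
  assert (Lw : length w = p) by (unfold w; rewrite length_map, length_seq; auto).
  assert (Lv : length v = (m * p)%nat) by (unfold v; rewrite length_map, length_seq; auto).
  apply (ind_inf_ge u w).
  - intro E. rewrite E in Lw. simpl in Lw. lia.
  - exists t. intros j Hj. rewrite Lw in Hj. unfold w. now rewrite nth_map_seq.
  - eapply Rbar_le_trans; [|apply (ind_word_ge u w v)].
    + rewrite Lv, Lw, mult_INR. simpl. apply Req_le. field. apply not_0_INR. lia.
    + exists t. intros j Hj. rewrite Lv in Hj. unfold v. now rewrite nth_map_seq.
    + repeat split; rewrite ?Lw, ?Lv; try nia.
      intros j Hj. unfold v, w. rewrite !nth_map_seq by (try apply Nat.mod_upper_bound; lia).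
      now apply periodic_window_mod with m.
Qed.

Lemma ind_inf_ge1 u : Rbar_le 1 (ind_inf u).
Proof.
  apply (ind_inf_ge_power u 1); [lia|].
  exists O, 1%nat. split; [lia|]. intros i Hi. lia.
Qed.

Definition rotation (eps x : R) : R :=
  if Rlt_dec (x - eps) 0 then x - eps + 1 else x - eps.

Definition rot_orbit (eps x0 : R) (j : nat) : R := Nat.iter j (rotation eps) x0.

Definition rot_code (eps l x : R) : option letter :=
  if Rlt_dec x l then Some (letter_of eps l x) else None.

Lemma rot_code_eq_inv eps l x y : rot_code eps l x = rot_code eps l y -> x < l ->
  y < l /\ letter_of eps l x = letter_of eps l y.
Proof.
  unfold rot_code. intros H Hx.
  destruct (Rlt_dec x l); [|lra]. destruct (Rlt_dec y l); [|discriminate]. split; congruence.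
Qed.

Definition letter_shift (eps : R) (X : letter) : R :=
  match X with LA => 1 - eps | LB => 1 - 2 * eps | LC => - eps end.

Lemma T3_letter_shift eps l x : T3 eps l x = x + letter_shift eps (letter_of eps l x).
Proof. unfold T3, letter_of. repeat destruct Rlt_dec; simpl; ring. Qed.

Definition crosses (c d x : R) : Prop :=
  (0 < d /\ c - d <= x < c) \/ (d < 0 /\ c <= x < c - d).

(* Moving [x] by [d] leaves [[0,1)]. *)
Definition wraps (d x : R) : Prop :=
  (0 < d /\ 1 - d <= x < 1) \/ (d < 0 /\ 0 <= x < - d).

Lemma crosses_close c d x y : crosses c d x -> crosses c d y -> Rabs (x - y) < Rabs d.
Proof. unfold crosses. intros H1 H2. unfold Rabs; repeat destruct Rcase_abs; lra. Qed.

Lemma wraps_close d x y : wraps d x -> wraps d y -> Rabs (x - y) < Rabs d.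
Proof. unfold wraps. intros H1 H2. unfold Rabs; repeat destruct Rcase_abs; lra. Qed.

Lemma IZR_abs_lt_1 (K : Z) : -1 < IZR K < 1 -> K = 0%Z.
Proof. intros [H1 H2]. apply lt_IZR in H1. apply lt_IZR in H2. lia. Qed.

Definition sparse (V : nat -> Prop) (D : nat) : Prop :=
  forall j j', (j < j')%nat -> V j -> V j' -> (j + D <= j')%nat.

Lemma sparse_gap_from (V1 V2 : nat -> Prop) D L b :
  sparse V1 D -> sparse V2 D -> V1 b -> (2 * L + 3 <= D)%nat ->
  exists g, forall j, (g <= j <= g + L)%nat -> ~ V1 j /\ ~ V2 j.
Proof.
  intros S1 S2 Hb HD.
  assert (HV1 : forall j, (b < j < b + D)%nat -> ~ V1 j)
    by (intros j Hj Hv; specialize (S1 b j ltac:(lia) Hb Hv); lia).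
  destruct (classic (exists b2, (b < b2 < b + D)%nat /\ V2 b2)) as [[b2 [Hb2 Hv2]]|Hno].
  - assert (HV2 : forall j, (b < j < b + D)%nat -> j <> b2 -> ~ V2 j).
    { intros j Hj Hne Hv. destruct (Nat.lt_ge_cases j b2).
      - specialize (S2 j b2 ltac:(lia) Hv Hv2). lia.
      - specialize (S2 b2 j ltac:(lia) Hv2 Hv). lia. }
    destruct (Nat.le_gt_cases (b + 2 + L) b2);
      [exists (S b) | exists (S b2)]; intros j Hj; split; (apply HV1 || apply HV2); lia.
  - exists (S b). intros j Hj. split; [apply HV1; lia|].
    intro Hv. apply Hno. exists j. split; [lia|exact Hv].
Qed.

Lemma sparse_gap (V1 V2 : nat -> Prop) D L :
  sparse V1 D -> sparse V2 D -> (2 * L + 3 <= D)%nat ->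
  exists g, forall j, (g <= j <= g + L)%nat -> ~ V1 j /\ ~ V2 j.
Proof.
  intros S1 S2 HD.
  destruct (classic (exists b, V1 b)) as [[b Hb]|N1]; [eapply sparse_gap_from; eauto|].
  destruct (classic (exists b, V2 b)) as [[b Hb]|N2].
  - destruct (sparse_gap_from V2 V1 D L b S2 S1 Hb HD) as [g Hg].
    exists g. intros j Hj. specialize (Hg j Hj). tauto.
  - exists O. intros j _. split; intro; eauto.
Qed.

Lemma exists_of_descent (f : nat -> R) (P : nat -> Prop) (delta : R) : 0 < delta ->
  (forall t, 0 <= f t) -> (forall t, P t \/ P (S t) \/ f (S t) <= f t - delta) ->
  exists t, P t.
Proof.
  intros Hd Hf Hstep.
  destruct (INR_archimed delta (f O) Hd) as [K HK].
  assert (H : forall K t, f t < INR K * delta -> exists t', P t').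
  { induction K0 as [|K0 IH]; intros t Ht; [specialize (Hf t); simpl in Ht; lra|].
    rewrite S_INR in Ht.
    destruct (Hstep t) as [Ht'|[Ht'|Ht']]; [eauto|eauto|]. apply (IH (S t)). lra. }
  exact (H K O HK).
Qed.

Lemma INR_lt_Z2Nat (m : Z) (i : nat) : (i < Z.to_nat m)%nat -> 0 <= INR i <= IZR m - 1.
Proof.
  intros Hi. split; [apply pos_INR|]. rewrite INR_IZR_INZ, <- minus_IZR.
  apply IZR_le. lia.
Qed.

Section ThreeIET.

Variable eps : R.
Hypothesis eps_range : 0 < eps < 1.
Hypothesis eps_irrational : irrational eps.

Lemma gauss_iter_range i : 0 < gauss_iter eps i < 1 /\ irrational (gauss_iter eps i).
Proof.
  induction i as [|i [Hr Hirr]]; [easy|]. exact (gauss_map_range _ Hr Hirr).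
Qed.

(* [pquot i] is the partial quotient [a_(i+1)] of [eps = [0; a_1, a_2, ...]]. *)
Definition pquot (i : nat) : Z := Int_part (/ gauss_iter eps i).

Lemma gauss_iter_S i : gauss_iter eps (S i) = / gauss_iter eps i - IZR (pquot i).
Proof. reflexivity. Qed.

Lemma pquot_ge1 i : (1 <= pquot i)%Z.
Proof.
  destruct (gauss_iter_range i) as [[H1 H2] _].
  destruct (base_Int_part (/ gauss_iter eps i)) as [_ B].
  assert (1 < / gauss_iter eps i) by (rewrite <- Rinv_1; apply Rinv_lt_contravar; lra).
  assert (Hpos : 0 < IZR (pquot i)) by (unfold pquot; lra).
  apply lt_IZR in Hpos. lia.
Qed.

Lemma pquot_mul_gauss_iter_le i : IZR (pquot i) * gauss_iter eps i <= 1.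
Proof.
  destruct (gauss_iter_range i) as [[H1 _] _].
  destruct (base_Int_part (/ gauss_iter eps i)) as [B _].
  apply (Rmult_le_compat_r (gauss_iter eps i)) in B; [|lra].
  rewrite Rinv_l in B; [exact B|lra].
Qed.

(* Shifted by one from the usual convergents: [cf_num (S i) / cf_den (S i) = p_i / q_i]. *)
Definition cf_num := continuant pquot 1 0.
Definition cf_den := continuant pquot 0 1.
Definition cf_err (i : nat) : R := IZR (cf_den i) * eps - IZR (cf_num i).

Lemma cf_den_SS i : cf_den (S (S i)) = (pquot i * cf_den (S i) + cf_den i)%Z.
Proof. reflexivity. Qed.

Lemma cf_den_incr i : (1 <= cf_den (S i))%Z /\ (cf_den i <= cf_den (S i))%Z.
Proof. pose proof (continuant_incr pquot pquot_ge1 i). unfold cf_den. lia. Qed.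

Lemma cf_err_S i : cf_err (S i) = - gauss_iter eps i * cf_err i.
Proof.
  induction i as [|i IH]; [unfold cf_err, cf_den, cf_num; simpl; lra|].
  destruct (gauss_iter_range i) as [[H1 _] _].
  assert (Hrec : cf_err (S (S i)) = IZR (pquot i) * cf_err (S i) + cf_err i).
  { unfold cf_err, cf_den, cf_num. rewrite !continuant_SS, !plus_IZR, !mult_IZR. ring. }
  rewrite Hrec, gauss_iter_S, IH. field. lra.
Qed.

Lemma cf_err_alternating i : cf_err i * cf_err (S i) < 0.
Proof.
  assert (Hnz : forall j, cf_err j <> 0).
  { induction j as [|j IH]; [unfold cf_err, cf_den, cf_num; simpl; lra|].
    destruct (gauss_iter_range j) as [[H1 _] _].
    rewrite cf_err_S. apply Rmult_integral_contrapositive. split; [lra|exact IH]. }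
  destruct (gauss_iter_range i) as [[H1 _] _].
  rewrite cf_err_S. specialize (Hnz i).
  assert (0 < cf_err i * cf_err i) by nra. nra.
Qed.

Lemma best_approximation i (d P : Z) : (0 < d < cf_den (S (S i)))%Z ->
  Rabs (cf_err (S i)) <= Rabs (IZR d * eps - IZR P).
Proof.
  intros Hd.
  set (q1 := cf_den (S i)) in *. set (q2 := cf_den (S (S i))) in *.
  set (p1 := cf_num (S i)). set (p2 := cf_num (S (S i))).
  destruct (cf_den_incr i) as [Hq1 _]. destruct (cf_den_incr (S i)) as [_ Hq2].
  fold q1 q2 in Hq1, Hq2.
  (* the convergent matrix is unimodular, so [(d, P)] is an integer combination of its rows *)
  assert (Hab : exists a b : Z, d = (a * q1 + b * q2)%Z /\ P = (a * p1 + b * p2)%Z).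
  { pose proof (continuant_det pquot (S i)) as D. fold cf_num cf_den p1 p2 q1 q2 in D.
    set (s := (p1 * q2 - p2 * q1)%Z) in D.
    assert (Hs : (s * s = 1)%Z) by (rewrite <- Z.abs_square, D; reflexivity).
    exists (s * (P * q2 - d * p2))%Z, (s * (d * p1 - P * q1))%Z.
    split; [transitivity (d * (s * s))%Z | transitivity (P * (s * s))%Z];
      solve [rewrite Hs; ring | unfold s; ring]. }
  destruct Hab as [a [b [Hd' HP]]].
  assert (Hr : IZR d * eps - IZR P = IZR a * cf_err (S i) + IZR b * cf_err (S (S i))).
  { unfold cf_err. fold q1 q2 p1 p2. rewrite Hd', HP, !plus_IZR, !mult_IZR. ring. }
  rewrite Hr. pose proof (cf_err_alternating (S i)) as E.
  set (e1 := cf_err (S i)) in *. set (e2 := cf_err (S (S i))) in *.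
  (* [0 < a q1 + b q2 < q2] forces [a <> 0] and [a b <= 0]; the errors alternate in sign *)
  assert (Hc : ((b = 0 /\ (a >= 1 \/ a <= -1)) \/ (a >= 1 /\ b <= -1) \/ (a <= -1 /\ b >= 1))%Z).
  { destruct (Z.lt_total a 0) as [Ha|[Ha|Ha]]; destruct (Z.lt_total b 0) as [Hb|[Hb|Hb]];
      try lia; subst; exfalso;
      solve [assert (b * q2 < 0)%Z by nia; lia | assert (q2 <= b * q2)%Z by nia; lia
            | assert (0 < a * q1)%Z by nia; assert (q2 <= b * q2)%Z by nia; lia
            | assert (a * q1 <= 0)%Z by nia; assert (b * q2 < 0)%Z by nia; lia]. }
  destruct Hc as [[-> [Ha|Ha]] | [[Ha Hb]|[Ha Hb]]];
    apply IZR_ge in Ha || apply IZR_le in Ha;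
    try (apply IZR_ge in Hb || apply IZR_le in Hb);
    simpl in *; unfold Rabs; repeat destruct Rcase_abs; nra.
Qed.

Variables l x0 : R.
Hypothesis l_gt_eps : eps < l.
Hypothesis l_gt_1_eps : 1 - eps < l.
Hypothesis l_lt_1 : l < 1.
Hypothesis x0_range : 0 <= x0 < l.

Local Notation z := (rot_orbit eps x0).
Local Notation T := (T3 eps l).
Local Notation u := (iet3_word eps l x0).

Lemma rot_orbit_S j : z (S j) = rotation eps (z j).
Proof. reflexivity. Qed.

Lemma rot_orbit_range j : 0 <= z j < 1.
Proof.
  induction j; [simpl; lra|].
  rewrite rot_orbit_S. unfold rotation. destruct Rlt_dec; lra.
Qed.

Lemma rot_orbit_mod j : exists K : Z, z j = x0 - INR j * eps + IZR K.
Proof.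
  induction j as [|j [K HK]]; [exists 0%Z; simpl; lra|].
  rewrite rot_orbit_S, S_INR. unfold rotation. destruct Rlt_dec.
  - exists (K + 1)%Z. rewrite plus_IZR. lra.
  - exists K. lra.
Qed.

Lemma rot_orbit_shift j d : exists K : Z, z (j + d) - z j = - INR d * eps + IZR K.
Proof.
  destruct (rot_orbit_mod j) as [K1 H1]. destruct (rot_orbit_mod (j + d)) as [K2 H2].
  exists (K2 - K1)%Z. rewrite H1, H2, minus_IZR, plus_INR. ring.
Qed.

(* Two visits at times [j < j'] give [|(j' - j) eps - K| < |cf_err (S i)|] for some
   integer [K], which best approximation forbids for [j' - j < cf_den (S (S i))]. *)
Lemma rot_orbit_sparse i (P : R -> Prop) :
  (forall x y, P x -> P y -> Rabs (x - y) < Rabs (cf_err (S i))) ->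
  sparse (fun j => P (z j)) (Z.to_nat (cf_den (S (S i)))).
Proof.
  intros HP j j' Hjj' Pj Pj'.
  destruct (Nat.lt_ge_cases (j' - j) (Z.to_nat (cf_den (S (S i))))) as [Hlt|Hge]; [|lia].
  exfalso.
  destruct (rot_orbit_shift j (j' - j)) as [K HK].
  replace (j + (j' - j))%nat with j' in HK by lia.
  pose proof (best_approximation i (Z.of_nat (j' - j)) K ltac:(lia)) as B.
  pose proof (HP _ _ Pj Pj') as C.
  rewrite <- INR_IZR_INZ in B.
  replace (z j - z j') with (INR (j' - j) * eps - IZR K) in C by lra.
  lra.
Qed.

(* The coding of [y] is read off the positions of [y] and [rotation eps y] relative to
   [0] and [l], so a shift crossing none of these points preserves it. *)
Lemma rot_code_shift y y' d (K : Z) : 0 <= y < 1 -> 0 <= y' < 1 -> y' = y + d + IZR K ->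
  ~ wraps d y -> ~ crosses l d y -> ~ wraps d (rotation eps y) ->
  ~ crosses l d (rotation eps y) ->
  rot_code eps l y' = rot_code eps l y.
Proof.
  intros Hy Hy' Hyy N1 N2 N3 N4.
  unfold wraps, crosses, rotation in *.
  assert (K = 0%Z) as ->.
  { apply IZR_abs_lt_1. destruct (Rlt_le_dec 0 d); [|destruct (Rlt_le_dec d 0)];
      try (assert (d = 0) by lra; subst; lra);
      destruct (Rlt_le_dec y (1 - d)); destruct (Rle_lt_dec (- d) y); lra. }
  rewrite Rplus_0_r in Hyy. subst y'. unfold rot_code, letter_of.
  destruct (Rlt_dec (y - eps) 0); repeat destruct Rlt_dec; try reflexivity; exfalso; lra.
Qed.

Lemma T3_first_return y : 0 <= y < l ->
  T y = if Rlt_dec (rotation eps y) l then rotation eps y else rotation eps (rotation eps y).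
Proof. intros Hy. unfold T3, rotation. repeat destruct Rlt_dec; lra. Qed.

Lemma iter_T3_range t : 0 <= Nat.iter t T x0 < l.
Proof.
  induction t; [exact x0_range|]. rewrite Nat.iter_succ.
  set (y := Nat.iter t T x0) in *. unfold T3. repeat destruct Rlt_dec; lra.
Qed.

(* [return_time k] is the index of [T^k x0] along the rotation orbit of [x0]. *)
Fixpoint return_time (k : nat) : nat :=
  match k with
  | O => O
  | S k => if Rlt_dec (z (S (return_time k))) l then S (return_time k)
           else S (S (return_time k))
  end.

Lemma iter_T3_return_time k : Nat.iter k T x0 = z (return_time k) /\ z (return_time k) < l.
Proof.
  induction k as [|k [IH1 IH2]]; [simpl; split; [reflexivity|lra]|].
  pose proof (rot_orbit_range (return_time k)) as Hr.
  rewrite Nat.iter_succ. cbn [return_time]. rewrite IH1, T3_first_return by lra.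
  rewrite !rot_orbit_S.
  destruct (Rlt_dec (rotation eps (z (return_time k))) l) as [Hin|Hout];
    split; try reflexivity; try exact Hin.
  rewrite !rot_orbit_S in *. unfold rotation in *. repeat destruct Rlt_dec; lra.
Qed.

Lemma iet3_word_return_time k : u k = letter_of eps l (z (return_time k)).
Proof. unfold iet3_word. now rewrite (proj1 (iter_T3_return_time k)). Qed.

Lemma return_time_step k :
  (S (return_time k) <= return_time (S k) <= S (S (return_time k)))%nat.
Proof. simpl. destruct Rlt_dec; lia. Qed.

Lemma return_time_lt k k' : (k < k')%nat -> (return_time k < return_time k')%nat.
Proof.
  induction 1 as [|k'' _ IH]; [pose proof (return_time_step k) | pose proof (return_time_step k'')];
    lia.
Qed.

Lemma return_time_le k k' : (k <= k')%nat -> (return_time k <= return_time k')%nat.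
Proof.
  intros H. destruct (Nat.eq_dec k k'); [subst; lia|].
  pose proof (return_time_lt k k'). lia.
Qed.

Lemma return_time_onto j : z j < l -> exists k, return_time k = j.
Proof.
  intros Hj.
  assert (H : exists k, (return_time k <= j < return_time (S k))%nat).
  { clear Hj. induction j as [|j [k Hk]];
      [exists O; pose proof (return_time_step 0); simpl in *; lia|].
    destruct (Nat.lt_ge_cases (S j) (return_time (S k))); [exists k; lia|].
    exists (S k). pose proof (return_time_step (S k)). lia. }
  destruct H as [k Hk]. exists k.
  destruct (Nat.eq_dec (return_time k) j) as [|Hne]; [assumption|]. exfalso.
  revert Hk. simpl. destruct Rlt_dec as [|Hnl]; intros; [lia|].
  apply Hnl. rewrite <- rot_orbit_S. replace (S (return_time k)) with j by lia. exact Hj.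
Qed.

Section PeriodicCoding.

Variables s q m : nat.
Hypothesis z_s_lt : z s < l.
Hypothesis q_pos : (1 <= q)%nat.
Hypothesis coding_periodic : forall j, (s <= j < s + (m - 1) * q)%nat ->
  rot_code eps l (z (j + q)) = rot_code eps l (z j).

Lemma return_time_periodic k0 k1 : return_time k0 = s -> return_time k1 = (s + q)%nat ->
  forall i, (return_time (k0 + i) < s + (m - 1) * q)%nat ->
  return_time (k0 + i + (k1 - k0)) = (return_time (k0 + i) + q)%nat.
Proof.
  intros Hk0 Hk1.
  assert (Hlt : (k0 < k1)%nat).
  { destruct (Nat.lt_ge_cases k0 k1) as [|Hge]; [assumption|].
    pose proof (return_time_le k1 k0 Hge). lia. }
  induction i as [|i IH]; intros Hi.
  - replace (k0 + 0 + (k1 - k0))%nat with k1 by lia. rewrite Nat.add_0_r. lia.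
  - assert (Hmono : (return_time (k0 + i) < return_time (k0 + S i))%nat)
      by (apply return_time_lt; lia).
    assert (Hge : (s <= return_time (k0 + i))%nat) by (rewrite <- Hk0; apply return_time_le; lia).
    pose proof (return_time_step (k0 + i)) as Hst.
    specialize (IH ltac:(lia)).
    replace (k0 + S i)%nat with (S (k0 + i)) in * by lia.
    replace (S (k0 + i) + (k1 - k0))%nat with (S (k0 + i + (k1 - k0))) by lia.
    cbn [return_time]. rewrite IH.
    set (a := return_time (k0 + i)) in *.
    pose proof (coding_periodic (S a) ltac:(lia)) as Hj.
    replace (S (a + q)) with (S a + q)%nat by lia.
    destruct (Rlt_dec (z (S a + q)) l) as [r1|r1];
      destruct (Rlt_dec (z (S a)) l) as [r2|r2]; try lia; exfalso.
    + apply r2. now apply (rot_code_eq_inv eps l _ _ Hj).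
    + apply r1. now apply (rot_code_eq_inv eps l _ _ (eq_sym Hj)).
Qed.

Lemma iet3_word_power_of_coding : (2 <= m)%nat -> has_power_factor u m.
Proof.
  intros Hm.
  destruct (return_time_onto s z_s_lt) as [k0 Hk0].
  assert (Hsq : z (s + q) < l)
    by (apply (rot_code_eq_inv eps l (z s)); [symmetry; apply coding_periodic; nia|assumption]).
  destruct (return_time_onto (s + q) Hsq) as [k1 Hk1].
  pose proof (return_time_periodic k0 k1 Hk0 Hk1) as Hshift.
  set (p := (k1 - k0)%nat) in *.
  assert (Hp : (1 <= p)%nat).
  { destruct (Nat.lt_ge_cases k0 k1) as [|Hge]; [unfold p; lia|].
    pose proof (return_time_le k1 k0 Hge). lia. }
  assert (Hblock : forall j, (j <= m - 1)%nat -> return_time (k0 + j * p) = (s + j * q)%nat).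
  { induction j as [|j IH]; intros Hj; [replace (k0 + 0 * p)%nat with k0 by lia; lia|].
    replace (k0 + S j * p)%nat with (k0 + j * p + p)%nat by lia.
    rewrite Hshift, IH; [lia|lia|]. rewrite IH by lia. nia. }
  exists k0, p. split; [exact Hp|]. intros i Hi.
  assert (Hsi : (return_time (k0 + i) < s + (m - 1) * q)%nat)
    by (rewrite <- (Hblock (m - 1)%nat) by lia; apply return_time_lt; lia).
  assert (Hge : (s <= return_time (k0 + i))%nat) by (rewrite <- Hk0; apply return_time_le; lia).
  rewrite !iet3_word_return_time, Hshift by exact Hsi.
  symmetry. apply (rot_code_eq_inv eps l (z (return_time (k0 + i)))).
  - symmetry. apply coding_periodic. lia.
  - apply iter_T3_return_time.
Qed.

End PeriodicCoding.

Lemma ind_ge_letter_run t m X : (1 <= m)%nat ->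
  (forall i, (i < m)%nat -> letter_of eps l (Nat.iter t T x0 + INR i * letter_shift eps X) = X) ->
  Rbar_le (INR m) (ind_inf u).
Proof.
  intros Hm Hrun.
  set (y := Nat.iter t T x0) in *.
  assert (Hiter : forall i, (i < m)%nat -> Nat.iter (t + i) T x0 = y + INR i * letter_shift eps X).
  { induction i as [|i IH]; intros Hi; [simpl; rewrite Nat.add_0_r; fold y; ring|].
    rewrite Nat.add_succ_r, Nat.iter_succ, IH, T3_letter_shift, Hrun by lia.
    rewrite S_INR. ring. }
  apply ind_inf_ge_power; [exact Hm|]. exists t, 1%nat. split; [lia|]. intros i Hi.
  unfold iet3_word. rewrite <- Nat.add_assoc, !Hiter, !Hrun by lia. reflexivity.
Qed.

Lemma ind_ge_half_pquot_generic i : (2 <= pquot i / 2)%Z ->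
  (5 <= 2 * cf_den (S i) + cf_den i)%Z ->
  Rbar_le (IZR (pquot i / 2)) (ind_inf u).
Proof.
  intros Hm H5.
  set (m := (pquot i / 2)%Z) in *. set (q := cf_den (S i)) in *.
  set (d := - cf_err (S i)).
  assert (Hd : Rabs d = Rabs (cf_err (S i))) by apply Rabs_Ropp.
  assert (Hq : (1 <= q)%Z) by apply cf_den_incr.
  assert (Hm2 : (2 * m <= pquot i)%Z) by (apply Z.mul_div_le; lia).
  set (qn := Z.to_nat q). set (mn := Z.to_nat m).
  set (L := ((mn - 1) * qn + 1)%nat).
  assert (HL : (2 * L + 3 <= Z.to_nat (cf_den (S (S i))))%nat)
    by (unfold L, qn, mn; rewrite cf_den_SS; fold q; nia).
  destruct (sparse_gap (fun j => wraps d (z j)) (fun j => crosses l d (z j)) _ L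
              (rot_orbit_sparse i _ (fun x y Hx Hy => eq_ind _ _ (wraps_close d x y Hx Hy) _ Hd))
              (rot_orbit_sparse i _ (fun x y Hx Hy => eq_ind _ _ (crosses_close l d x y Hx Hy) _ Hd))
              HL) as [g Hg].
  assert (Hs : exists s, (g <= s <= S g)%nat /\ z s < l).
  { destruct (Rlt_dec (z g) l) as [|Hout]; [exists g; split; [lia|assumption]|].
    exists (S g). split; [lia|]. rewrite rot_orbit_S. unfold rotation.
    pose proof (rot_orbit_range g). destruct Rlt_dec; lra. }
  destruct Hs as [s [Hs Hzs]].
  replace (IZR m) with (INR mn) by (unfold mn; rewrite INR_IZR_INZ; f_equal; lia).
  apply ind_inf_ge_power; [lia|].
  apply (iet3_word_power_of_coding s qn mn Hzs ltac:(lia)); [|lia].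
  intros j Hj.
  destruct (Hg j ltac:(unfold L in *; nia)) as [N1 N2].
  destruct (Hg (S j) ltac:(unfold L in *; nia)) as [N3 N4].
  rewrite rot_orbit_S in N3, N4.
  destruct (rot_orbit_shift j qn) as [K HK].
  apply (rot_code_shift (z j) (z (j + qn)) d (K - cf_num (S i)));
    try assumption; try apply rot_orbit_range.
  rewrite minus_IZR. unfold d, cf_err. fold q.
  replace (IZR q) with (INR qn) by (unfold qn; rewrite INR_IZR_INZ; f_equal; lia). lra.
Qed.

(* A run of [C]s: [T] translates by [-eps] on [[eps, l)]. *)
Lemma ind_ge_half_pquot_first : (2 <= pquot 0 / 2)%Z ->
  Rbar_le (IZR (pquot 0 / 2)) (ind_inf u).
Proof.
  intros Hm. set (m := (pquot 0 / 2)%Z) in *.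
  assert (Hm2 : (2 * m <= pquot 0)%Z) by (apply Z.mul_div_le; lia).
  pose proof (pquot_mul_gauss_iter_le 0) as Ha.
  apply IZR_le in Hm2. rewrite mult_IZR in Hm2. simpl in Ha.
  assert (HmR : 2 <= IZR m) by (apply IZR_le; lia).
  assert (Hme : (IZR m + 2) * eps <= 1) by nra.
  destruct (exists_of_descent (fun t => Nat.iter t T x0) (fun t => IZR m * eps <= Nat.iter t T x0)
              eps ltac:(lra) (fun t => proj1 (iter_T3_range t))) as [t Ht].
  { intros t. pose proof (iter_T3_range t). cbv beta. rewrite Nat.iter_succ.
    set (y := Nat.iter t T x0) in *. unfold T3.
    destruct (Rle_lt_dec (IZR m * eps) y); [left; lra|right].
    repeat destruct Rlt_dec; [left|left|right]; nra. }
  replace (IZR m) with (INR (Z.to_nat m)) by (rewrite INR_IZR_INZ; f_equal; lia).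
  apply (ind_ge_letter_run t _ LC); [lia|]. intros i Hi.
  pose proof (INR_lt_Z2Nat m i Hi). pose proof (iter_T3_range t).
  set (y := Nat.iter t T x0) in *. unfold letter_of, letter_shift.
  repeat destruct Rlt_dec; try reflexivity; exfalso; nra.
Qed.

(* For [a_1 = 1] we have [eps > 1/2]; a run of [A]s: [T] translates by [1 - eps] on
   [[0, l - 1 + eps)]. *)
Lemma ind_ge_half_pquot_second : pquot 0 = 1%Z -> (2 <= pquot 1 / 2)%Z ->
  Rbar_le (IZR (pquot 1 / 2)) (ind_inf u).
Proof.
  intros H0 Hm. set (m := (pquot 1 / 2)%Z) in *.
  assert (Hm2 : (2 * m <= pquot 1)%Z) by (apply Z.mul_div_le; lia).
  assert (Hx1 : gauss_iter eps 1 = (1 - eps) / eps)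
    by (rewrite gauss_iter_S, H0; simpl; field; lra).
  pose proof (pquot_mul_gauss_iter_le 1) as Ha.
  pose proof (pquot_mul_gauss_iter_le 0) as Ha0.
  rewrite Hx1 in Ha. rewrite H0 in Ha0. simpl in Ha0.
  apply IZR_le in Hm2. rewrite mult_IZR in Hm2.
  assert (HmR : 2 <= IZR m) by (apply IZR_le; lia).
  assert (Ha' : IZR (pquot 1) * (1 - eps) <= eps).
  { replace (IZR (pquot 1) * (1 - eps)) with (IZR (pquot 1) * ((1 - eps) / eps) * eps)
      by (field; lra). nra. }
  assert (Hme : (IZR m + 3) * (1 - eps) <= 1) by nra.
  destruct (exists_of_descent (fun t => l - Nat.iter t T x0)
              (fun t => Nat.iter t T x0 < l - IZR m * (1 - eps)) (1 - eps) ltac:(lra))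
    as [t Ht].
  { intros t. pose proof (iter_T3_range t). lra. }
  { intros t. pose proof (iter_T3_range t). cbv beta. rewrite Nat.iter_succ.
    set (y := Nat.iter t T x0) in *. unfold T3. repeat destruct Rlt_dec; nra. }
  replace (IZR m) with (INR (Z.to_nat m)) by (rewrite INR_IZR_INZ; f_equal; lia).
  apply (ind_ge_letter_run t _ LA); [lia|]. intros i Hi.
  pose proof (INR_lt_Z2Nat m i Hi). pose proof (iter_T3_range t).
  set (y := Nat.iter t T x0) in *. unfold letter_of, letter_shift.
  repeat destruct Rlt_dec; try reflexivity; exfalso; nra.
Qed.

Lemma ind_ge_half_pquot i : Rbar_le (IZR (pquot i / 2)) (ind_inf u).
Proof.
  destruct (Z_le_gt_dec (pquot i / 2) 1) as [Hle|Hgt].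
  { eapply Rbar_le_trans; [|apply ind_inf_ge1]. simpl. now apply IZR_le. }
  destruct (Z_le_gt_dec 5 (2 * cf_den (S i) + cf_den i)) as [H5|H5].
  { apply ind_ge_half_pquot_generic; lia. }
  (* only the first two partial quotients have such small denominators *)
  destruct i as [|[|i]].
  - apply ind_ge_half_pquot_first. lia.
  - apply ind_ge_half_pquot_second; [|lia].
    assert (cf_den 2 = pquot 0 * 1 + 0 /\ cf_den 1 = 1)%Z as [E2 E1] by easy.
    rewrite E2, E1 in H5. pose proof (pquot_ge1 0). lia.
  - exfalso. rewrite cf_den_SS in H5.
    destruct (cf_den_incr i) as [H1 _]. destruct (cf_den_incr (S i)) as [H2 _].
    pose proof (pquot_ge1 (S i)). nia.
Qed.

End ThreeIET.

Theorem proposition2 (eps l x0 : R) :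
  0 < eps < 1 -> irrational eps ->
  Rmax eps (1 - eps) < l -> l < 1 ->
  0 <= x0 < l ->
  (exists M : Z, forall n : nat, (1 <= n)%nat -> (cf_quotient eps n <= M)%Z) ->
  Rbar_le
    (Lub_Rbar (fun r : R => exists n : nat, (1 <= n)%nat /\
        r = IZR (Z.div (cf_quotient eps n) 2)))
    (ind_inf (iet3_word eps l x0)).
Proof.
  intros He Hi Hl Hl1 Hx _.
  apply Rmax_Rlt in Hl as [Hle Hl1e].
  apply (proj2 (Lub_Rbar_correct _)). intros r [n [_ ->]].
  exact (ind_ge_half_pquot eps He Hi l x0 Hle Hl1e Hl1 Hx (n - 1)).
Qed.
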